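(* With $V=V(z,1)$, $u_1=u_1(z)=1/(1-V(z,1))$ and \[ Q(z)=\frac{V(z,1)^2}{u_1(z)-1}-\frac{u_1(z)B(z,1,1)}{u_1(z)-1}+z\,u_1(z), \] the partial derivatives of $B$ satisfy \[ B_x(z,1,1)=\frac{u_1(z)-1}{u_1(z)}\,Q(z)\big(1-Q(z)\big),\qquad B_z(z,1,1)=\frac{u_1(z)-1}{z\,u_1(z)}\,Q(z)\big(1-Q(z)\big)+u_1(z)-1 . \]
   Context: $B(z,x,u)$ is the generating function of rooted 2-connected planar maps (no cut vertex; loops and multiple edges allowed) excluding the single-edge and single-loop maps, with $z$ marking edges, $x$ non-root faces and $u$ the root face valency; explicitly \[ B=-\tfrac12\big(1-(1+U-V+UV-2U^2V)u+U(1-V)^2u^2\big)+\tfrac12\big(1-(1-V)u\big)\sqrt{1-2U(1+V-2UV)u+U^2(1-V)^2u^2}, \] where $U=U(z,x)$, $V=V(z,x)$ are the power series determined by $z=U(1-V)^2$, $xz=V(1-U)^2$. $B_x,B_z$ are partial derivatives. *)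

From Stdlib Require Import Reals.
From Coquelicot Require Import Coquelicot.
Open Scope R_scope.

(* The square root is the real
   nonnegative square root (the radicand has constant term 1). *)
Definition Bf (U V : R -> R -> R) (z x u : R) : R :=
  let a := U z x in let b := V z x in
  - / 2 * (1 - (1 + a - b + a * b - 2 * a ^ 2 * b) * u + a * (1 - b) ^ 2 * u ^ 2)
  + / 2 * (1 - (1 - b) * u)
      * sqrt (1 - 2 * a * (1 + b - 2 * a * b) * u + a ^ 2 * (1 - b) ^ 2 * u ^ 2).

Definition u1 (V : R -> R -> R) (z : R) : R := / (1 - V z 1).

Definition Qf (U V : R -> R -> R) (z : R) : R :=
  (V z 1) ^ 2 / (u1 V z - 1) - u1 V z * Bf U V z 1 1 / (u1 V z - 1) + z * u1 V z.

(* U, V are "the power series determined by z = U(1-V)^2, xz = V(1-U)^2":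
   on a neighbourhood |z| < d, |x - 1| < d they solve the system, are jointly
   continuous and vanish at z = 0 (this singles out the power-series branch). *)
Definition UV_system (U V : R -> R -> R) (d : R) : Prop :=
  0 < d /\
  forall z x, Rabs z < d -> Rabs (x - 1) < d ->
    z = U z x * (1 - V z x) ^ 2 /\
    x * z = V z x * (1 - U z x) ^ 2 /\
    U 0 x = 0 /\ V 0 x = 0 /\
    continuous (fun p : R * R => U (fst p) (snd p)) (z, x) /\
    continuous (fun p : R * R => V (fst p) (snd p)) (z, x).

From Stdlib Require Import Reals Lra Psatz.
From Coquelicot Require Import Coquelicot.
Open Scope R_scope.

(* On the diagonal x = 1 the system z = U(1-V)^2, z = V(1-U)^2 forces
   U(z,1) = V(z,1) =: w for small z (the map a |-> a(1-a)^2 is injective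
   near 0), with z = w(1-w)^2.  There the radicand of B is the square
   (1-w-w^2)^2, so B(z,1,1) = w^2 - 2w^3, Q(z) = w and u_1(z) = 1/(1-w);
   the two claimed right-hand sides reduce to w^2(1-w) and 2w/(1-w).

   The derivatives are obtained without an implicit function theorem, by
   Caratheodory's criterion: a difference quotient that extends
   continuously gives the derivative.  This yields w'(z) = 1/((1-w)(1-3w))
   (inverse of the cubic), and U_x, V_x at x = 1 by solving the linearised
   2x2 system, whose determinant stays positive near the diagonal.  The
   chain rule (auto_derive) then gives B_x and B_z on the diagonal. *)

Lemma ball_R_iff (x e y : R) : ball x e y <-> Rabs (y - x) < e.
Proof. unfold ball; simpl; unfold AbsRing_ball, abs, minus, plus, opp; simpl. tauto. Qed.

Lemma locally_R_intro (x del : R) (P : R -> Prop) :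
  0 < del -> (forall y, Rabs (y - x) < del -> P y) -> locally x P.
Proof. intros Hdel HP. exists (mkposreal del Hdel). intros y Hy. apply HP, ball_R_iff, Hy. Qed.

Lemma locally_R_elim (x : R) (P : R -> Prop) :
  locally x P -> exists del, 0 < del /\ forall y, Rabs (y - x) < del -> P y.
Proof.
  intros [e He]. exists e. split; [apply cond_pos|].
  intros y Hy. apply He, ball_R_iff, Hy.
Qed.

Lemma is_derive_caratheodory (f g : R -> R) (x : R) :
  locally x (fun y => f y - f x = (y - x) * g y) -> continuous g x -> is_derive f x (g x).
Proof.
  intros Hslope Hg. split; [apply is_linear_scal_l|].
  intros y Hy. apply (@is_filter_lim_locally_unique R_AbsRing R_NormedModule) in Hy. subst y.
  intros eps. apply filterlim_locally with (eps := eps) in Hg.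
  generalize (filter_and _ _ Hslope Hg). apply filter_imp. intros y [Hfy Hgy].
  unfold norm, minus, plus, opp, scal; simpl. unfold abs, mult; simpl. unfold mult, plus, opp; simpl.
  replace (f y + - f x + - ((y + - x) * g x)) with ((y - x) * (g y - g x))
    by (replace (f y + - f x) with (f y - f x) by ring; rewrite Hfy; ring).
  rewrite Rabs_mult, Rmult_comm. replace (y + - x) with (y - x) by ring.
  apply Rmult_le_compat_r; [apply Rabs_pos | apply Rlt_le, ball_R_iff, Hgy].
Qed.

(* Continuity of real polynomial expressions in continuous functions; the
   lemmas restate the library ones over R so that they apply by pattern. *)
Lemma continuous_Rmult (f g : R -> R) x :
  continuous f x -> continuous g x -> continuous (fun y => f y * g y) x.
Proof. exact (continuous_mult f g x). Qed.

Lemma continuous_Rplus (f g : R -> R) x :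
  continuous f x -> continuous g x -> continuous (fun y => f y + g y) x.
Proof. exact (continuous_plus f g x). Qed.

Lemma continuous_Rminus (f g : R -> R) x :
  continuous f x -> continuous g x -> continuous (fun y => f y - g y) x.
Proof. exact (continuous_minus f g x). Qed.

Lemma continuous_Rpow (f : R -> R) x n :
  continuous f x -> continuous (fun y => f y ^ n) x.
Proof.
  intros Hf. induction n as [|n IH]; simpl.
  - apply continuous_const.
  - apply continuous_Rmult; assumption.
Qed.

Ltac continuity_of_polynomial := repeat match goal with
  | |- continuous (fun _ => ?c) _ => apply continuous_const
  | |- continuous (fun y => @?f y * @?g y) _ => apply (continuous_Rmult f g)
  | |- continuous (fun y => @?f y + @?g y) _ => apply (continuous_Rplus f g)
  | |- continuous (fun y => @?f y - @?g y) _ => apply (continuous_Rminus f g)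
  | |- continuous (fun y => @?f y ^ ?n) _ => apply (continuous_Rpow f _ n)
  | H : continuous _ _ |- _ => exact H
  end.

Lemma continuous_sections (F : R -> R -> R) (z x : R) :
  continuous (fun p : R * R => F (fst p) (snd p)) (z, x) ->
  continuous (fun y => F y x) z /\ continuous (fun t => F z t) x.
Proof.
  intros HF. split.
  - exact (continuous_comp_2 (fun y => y) (fun _ => x) F z
             (continuous_id z) (continuous_const x z) HF).
  - exact (continuous_comp_2 (fun _ => z) (fun t => t) F x
             (continuous_const z x) (continuous_id x) HF).
Qed.

(* a(1-b)^2 - b(1-a)^2 = (a-b)(1-ab): near 0 the system at x = 1 forces U = V. *)
Lemma cubic_injective_near_0 a b : Rabs a < 1/10 -> Rabs b < 1/10 ->
  a * (1 - b) ^ 2 = b * (1 - a) ^ 2 -> a = b.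
Proof.
  intros Ha Hb H. apply Rabs_def2 in Ha; apply Rabs_def2 in Hb.
  assert (E : (a - b) * (1 - a * b) = 0) by (apply Rminus_diag_eq in H; rewrite <- H; ring).
  apply Rmult_integral in E. destruct E; nra.
Qed.

(* Difference quotient of a |-> a(1-a)^2; at a = b it is the derivative
   (1-a)(1-3a), and it stays positive near 0. *)
Definition cubic_slope (a b : R) : R := 1 - 2 * (a + b) + (a ^ 2 + a * b + b ^ 2).

Lemma cubic_slope_spec a b :
  a * (1 - a) ^ 2 - b * (1 - b) ^ 2 = (a - b) * cubic_slope a b.
Proof. unfold cubic_slope; ring. Qed.

Lemma cubic_slope_pos a b : Rabs a < 1/10 -> Rabs b < 1/10 -> 0 < cubic_slope a b.
Proof. intros Ha Hb. apply Rabs_def2 in Ha; apply Rabs_def2 in Hb. unfold cubic_slope; nra. Qed.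

Lemma derive_inverse_cubic (W : R -> R) (z : R) :
  locally z (fun y => Rabs (W y) < 1/10 /\ y = W y * (1 - W y) ^ 2) ->
  continuous W z -> Rabs (W z) < 1/10 ->
  is_derive W z (/ ((1 - W z) * (1 - 3 * W z))).
Proof.
  intros Hloc HW Hwz.
  assert (Hz : z = W z * (1 - W z) ^ 2) by (apply (locally_singleton _ _ Hloc)).
  replace (/ ((1 - W z) * (1 - 3 * W z))) with ((fun y => / cubic_slope (W y) (W z)) z)
    by (cbv beta; f_equal; unfold cubic_slope; ring).
  apply (is_derive_caratheodory W (fun y => / cubic_slope (W y) (W z))).
  - generalize Hloc. apply filter_imp. intros y [Hwy Hy].
    assert (Hpos := cubic_slope_pos _ _ Hwy Hwz).
    assert (Hdiff := cubic_slope_spec (W y) (W z)).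
    rewrite <- Hy, <- Hz in Hdiff. rewrite Hdiff. field. lra.
  - apply continuous_Rinv_comp.
    + unfold cubic_slope. continuity_of_polynomial.
    + apply Rgt_not_eq, cubic_slope_pos; assumption.
Qed.

(* Determinant of the linear system satisfied by the increments of U and V
   in x, measured from the diagonal point (w,w). *)
Definition system_det (a b w : R) : R :=
  (1 - b) ^ 2 * (1 - a) ^ 2 - w ^ 2 * (2 - b - w) * (2 - a - w).

Lemma system_det_pos a b w : Rabs (a - w) < 1/10 -> Rabs (b - w) < 1/10 -> Rabs w < 1/10 ->
  0 < system_det a b w.
Proof.
  intros Ha Hb Hw. apply Rabs_def2 in Ha; apply Rabs_def2 in Hb; apply Rabs_def2 in Hw.
  unfold system_det.
  assert (Hab : 16/25 <= (1 - b) * (1 - a)) by nra.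
  assert (Hq : 0 <= (2 - b - w) * (2 - a - w) <= 144/25) by (split; nra).
  assert (Hw2 : 0 <= w ^ 2 <= 1/25) by (split; nra).
  assert (0 <= w ^ 2 * ((2 - b - w) * (2 - a - w)) <= 144/625) by (split; nra).
  nra.
Qed.

Lemma system_slopes (a b t z w : R) :
  z = a * (1 - b) ^ 2 -> t * z = b * (1 - a) ^ 2 -> z = w * (1 - w) ^ 2 ->
  (a - w) * system_det a b w = (t - 1) * (z * w * (2 - b - w)) /\
  (b - w) * system_det a b w = (t - 1) * (z * (1 - b) ^ 2).
Proof.
  intros Hz Htz Hw. unfold system_det.
  assert (Ez : a * (1 - b) ^ 2 - z = 0) by lra.
  assert (Etz : b * (1 - a) ^ 2 - t * z = 0) by lra.
  split.
  - assert (K : (a - w) * ((1 - b) ^ 2 * (1 - a) ^ 2 - w ^ 2 * (2 - b - w) * (2 - a - w))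
                - (t - 1) * (z * w * (2 - b - w))
              = (1 - a) ^ 2 * (a * (1 - b) ^ 2 - z)
                + w * (2 - b - w) * (b * (1 - a) ^ 2 - t * z)) by (rewrite Hw; ring).
    rewrite Ez, Etz in K. lra.
  - assert (K : (b - w) * ((1 - b) ^ 2 * (1 - a) ^ 2 - w ^ 2 * (2 - b - w) * (2 - a - w))
                - (t - 1) * (z * (1 - b) ^ 2)
              = (1 - b) ^ 2 * (b * (1 - a) ^ 2 - t * z)
                + w * (2 - a - w) * (a * (1 - b) ^ 2 - z)) by (rewrite Hw; ring).
    rewrite Ez, Etz in K. lra.
Qed.

Lemma derive_x_of_system (A B : R -> R) (z w : R) :
  locally 1 (fun t => z = A t * (1 - B t) ^ 2 /\ t * z = B t * (1 - A t) ^ 2 /\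
                      Rabs (A t - w) < 1/10 /\ Rabs (B t - w) < 1/10) ->
  continuous A 1 -> continuous B 1 -> A 1 = w -> B 1 = w -> Rabs w < 1/10 ->
  is_derive A 1 (2 * w ^ 2 * (1 - w) / ((1 - 3 * w) * (1 + w))) /\
  is_derive B 1 (w * (1 - w) ^ 2 / ((1 - 3 * w) * (1 + w))).
Proof.
  intros Hloc HA HB HA1 HB1 Hw.
  assert (Hz : z = w * (1 - w) ^ 2).
  { destruct (locally_singleton _ _ Hloc) as [Hz _]. rewrite Hz, HA1, HB1. ring. }
  set (det := fun t => system_det (A t) (B t) w).
  assert (Hdet : forall t, Rabs (A t - w) < 1/10 -> Rabs (B t - w) < 1/10 -> 0 < det t)
    by (intros t Ha Hb; apply system_det_pos; assumption).
  assert (Hdet1 : 0 < det 1)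
    by (apply Hdet; rewrite ?HA1, ?HB1, Rminus_diag_eq, Rabs_R0; lra).
  assert (Hdet_cont : continuous (fun t => / det t) 1).
  { apply continuous_Rinv_comp; [|lra]. unfold det, system_det. continuity_of_polynomial. }
  assert (Hslopes : locally 1 (fun t =>
            A t - A 1 = (t - 1) * (z * w * (2 - B t - w) * / det t) /\
            B t - B 1 = (t - 1) * (z * (1 - B t) ^ 2 * / det t))).
  { generalize Hloc. apply filter_imp. intros t (Hzt & Htz & Ha & Hb).
    assert (Hpos := Hdet t Ha Hb).
    destruct (system_slopes (A t) (B t) t z w Hzt Htz Hz) as [Ea Eb].
    rewrite HA1, HB1. split.
    - apply (Rmult_eq_reg_r (det t)); [|lra]. unfold det. rewrite Ea. field. fold (det t). lra.
    - apply (Rmult_eq_reg_r (det t)); [|lra]. unfold det. rewrite Eb. field. fold (det t). lra. }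
  assert (H1w : 0 < 1 - 3 * w /\ 0 < 1 + w) by (apply Rabs_def2 in Hw; lra).
  split.
  - replace (2 * w ^ 2 * (1 - w) / ((1 - 3 * w) * (1 + w)))
      with ((fun t => z * w * (2 - B t - w) * / det t) 1).
    + apply (is_derive_caratheodory A (fun t => z * w * (2 - B t - w) * / det t)).
      * generalize Hslopes. apply filter_imp. tauto.
      * apply continuous_Rmult; [continuity_of_polynomial | exact Hdet_cont].
    + cbv beta. unfold det, system_det. rewrite HA1, HB1, Hz. field.
      unfold det, system_det in Hdet1. rewrite HA1, HB1 in Hdet1. lra.
  - replace (w * (1 - w) ^ 2 / ((1 - 3 * w) * (1 + w)))
      with ((fun t => z * (1 - B t) ^ 2 * / det t) 1).
    + apply (is_derive_caratheodory B (fun t => z * (1 - B t) ^ 2 * / det t)).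
      * generalize Hslopes. apply filter_imp. tauto.
      * apply continuous_Rmult; [continuity_of_polynomial | exact Hdet_cont].
    + cbv beta. unfold det, system_det. rewrite HA1, HB1, Hz. field.
      unfold det, system_det in Hdet1. rewrite HA1, HB1 in Hdet1. lra.
Qed.

Lemma sqrt_diagonal_radicand (w e : R) :
  e = (1 - w - w ^ 2) ^ 2 -> Rabs w < 1/10 -> sqrt e = 1 - w - w ^ 2.
Proof. intros -> Hw. apply Rabs_def2 in Hw. apply sqrt_pow2. nra. Qed.

Lemma Bf_on_diagonal (U V : R -> R -> R) (z : R) :
  V z 1 = U z 1 -> Rabs (U z 1) < 1/10 -> Bf U V z 1 1 = U z 1 ^ 2 - 2 * U z 1 ^ 3.
Proof.
  intros Hdiag Hw. unfold Bf; cbv zeta. rewrite Hdiag.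
  rewrite (sqrt_diagonal_radicand (U z 1)); [field | ring | exact Hw].
Qed.

Lemma Bx_on_diagonal (U V : R -> R -> R) (z w : R) :
  U z 1 = w -> V z 1 = w -> Rabs w < 1/10 ->
  is_derive (fun x => U z x) 1 (2 * w ^ 2 * (1 - w) / ((1 - 3 * w) * (1 + w))) ->
  is_derive (fun x => V z x) 1 (w * (1 - w) ^ 2 / ((1 - 3 * w) * (1 + w))) ->
  is_derive (fun x => Bf U V z x 1) 1 (w ^ 2 * (1 - w)).
Proof.
  intros HU HV Hw dU dV. assert (Hw' := Hw). apply Rabs_def2 in Hw'.
  unfold Bf. auto_derive.
  { repeat split; try (eexists; eassumption). rewrite HU, HV. nra. }
  replace (Derive (fun x : R => U z x) 1) with (2 * w ^ 2 * (1 - w) / ((1 - 3 * w) * (1 + w)))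
    by (symmetry; apply is_derive_unique; exact dU).
  replace (Derive (fun x : R => V z x) 1) with (w * (1 - w) ^ 2 / ((1 - 3 * w) * (1 + w)))
    by (symmetry; apply is_derive_unique; exact dV).
  rewrite HU, HV.
  match goal with
  | |- context [sqrt ?e] => rewrite (sqrt_diagonal_radicand w e); [|ring|exact Hw]
  end.
  field. repeat split; nra.
Qed.

(* Chain rule for B_z(z,1,1) = (2w - 6w^2) w'(z) along the diagonal. *)
Lemma Bz_on_diagonal (U V : R -> R -> R) (z w : R) :
  locally z (fun y => V y 1 = U y 1 /\ Rabs (U y 1) < 1/10) ->
  U z 1 = w -> Rabs w < 1/10 ->
  is_derive (fun y => U y 1) z (/ ((1 - w) * (1 - 3 * w))) ->
  is_derive (fun y => Bf U V y 1 1) z (2 * w / (1 - w)).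
Proof.
  intros Hloc HU Hw dW. assert (Hw' := Hw). apply Rabs_def2 in Hw'.
  apply (is_derive_ext_loc (fun y => U y 1 ^ 2 - 2 * U y 1 ^ 3)).
  { generalize Hloc. apply filter_imp. intros y [Hdiag Hy].
    symmetry. apply Bf_on_diagonal; assumption. }
  auto_derive; [repeat split; eexists; exact dW|].
  replace (Derive (fun y : R => U y 1) z) with (/ ((1 - w) * (1 - 3 * w)))
    by (symmetry; apply is_derive_unique; exact dW).
  rewrite HU. field. split; lra.
Qed.

Lemma paper_values_on_diagonal (U V : R -> R -> R) (z w : R) :
  U z 1 = w -> V z 1 = w -> z = w * (1 - w) ^ 2 -> w <> 0 -> Rabs w < 1/10 ->
  (u1 V z - 1) / u1 V z * Qf U V z * (1 - Qf U V z) = w ^ 2 * (1 - w) /\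
  (u1 V z - 1) / (z * u1 V z) * Qf U V z * (1 - Qf U V z) + u1 V z - 1 = 2 * w / (1 - w).
Proof.
  intros HU HV Hz Hw0 Hw. apply Rabs_def2 in Hw.
  assert (Hu1 : u1 V z = / (1 - w)) by (unfold u1; rewrite HV; reflexivity).
  assert (HB : Bf U V z 1 1 = w ^ 2 - 2 * w ^ 3)
    by (rewrite <- HU; apply Bf_on_diagonal; [congruence | rewrite HU; apply Rabs_def1; lra]).
  assert (HQ : Qf U V z = w).
  { unfold Qf. rewrite Hu1, HB, HV, Hz. field. split; lra. }
  rewrite HQ, Hu1, Hz. split; field; repeat split; lra.
Qed.

Section DiagonalBranch.

Variables (U V : R -> R -> R) (d : R).
Hypothesis HUV : UV_system U V d.

Lemma UV_sections_continuous (z : R) : Rabs z < d ->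
  continuous (fun y => U y 1) z /\ continuous (fun t => U z t) 1 /\
  continuous (fun y => V y 1) z /\ continuous (fun t => V z t) 1.
Proof.
  intros Hz. destruct HUV as [Hd HS].
  assert (H1 : Rabs (1 - 1) < d) by (rewrite Rminus_diag_eq, Rabs_R0; lra).
  destruct (HS z 1 Hz H1) as (_ & _ & _ & _ & HU & HV).
  destruct (continuous_sections U z 1 HU), (continuous_sections V z 1 HV). tauto.
Qed.

Lemma UV_diagonal_branch : exists eps, 0 < eps /\ forall z, Rabs z < eps ->
  Rabs z < d /\ Rabs (U z 1) < 1/10 /\ V z 1 = U z 1 /\ z = U z 1 * (1 - U z 1) ^ 2.
Proof.
  destruct HUV as [Hd HS].
  assert (H0 : Rabs 0 < d) by (rewrite Rabs_R0; lra).
  assert (H1 : Rabs (1 - 1) < d) by (rewrite Rminus_diag_eq, Rabs_R0; lra).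
  destruct (HS 0 1 H0 H1) as (_ & _ & HU0 & HV0 & _).
  destruct (UV_sections_continuous 0 H0) as (cU & _ & cV & _).
  assert (Hsmall : 0 < 1/10) by lra.
  destruct (locally_R_elim _ _ (proj1 (filterlim_locally _ _) cU (mkposreal _ Hsmall)))
    as [dU [HdU BU]].
  destruct (locally_R_elim _ _ (proj1 (filterlim_locally _ _) cV (mkposreal _ Hsmall)))
    as [dV [HdV BV]].
  exists (Rmin d (Rmin dU dV)). split; [repeat apply Rmin_glb_lt; assumption|].
  intros z Hz.
  assert (Hzd : Rabs z < d) by (eapply Rlt_le_trans; [exact Hz | apply Rmin_l]).
  assert (HzUV : Rabs (z - 0) < dU /\ Rabs (z - 0) < dV).
  { rewrite Rminus_0_r. split; eapply Rlt_le_trans; try exact Hz;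
      eapply Rle_trans; [apply Rmin_r | apply Rmin_l | apply Rmin_r | apply Rmin_r]. }
  assert (HUz := proj1 (ball_R_iff _ _ _) (BU z (proj1 HzUV))).
  assert (HVz := proj1 (ball_R_iff _ _ _) (BV z (proj2 HzUV))).
  simpl in HUz, HVz. rewrite HU0, Rminus_0_r in HUz. rewrite HV0, Rminus_0_r in HVz.
  destruct (HS z 1 Hzd H1) as (Ez & Exz & _).
  assert (Hdiag : V z 1 = U z 1).
  { symmetry. apply cubic_injective_near_0; [assumption | assumption | lra]. }
  repeat split; try assumption. rewrite Hdiag in Ez at 1. exact Ez.
Qed.

Lemma UV_system_near_x1 (z w : R) : Rabs z < d -> U z 1 = w -> V z 1 = w ->
  locally 1 (fun t => z = U z t * (1 - V z t) ^ 2 /\ t * z = V z t * (1 - U z t) ^ 2 /\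
                      Rabs (U z t - w) < 1/10 /\ Rabs (V z t - w) < 1/10).
Proof.
  intros Hz HU HV. destruct HUV as [Hd HS].
  destruct (UV_sections_continuous z Hz) as (_ & cU & _ & cV).
  assert (Hsmall : 0 < 1/10) by lra.
  assert (BU := proj1 (filterlim_locally _ _) cU (mkposreal _ Hsmall)).
  assert (BV := proj1 (filterlim_locally _ _) cV (mkposreal _ Hsmall)).
  assert (Bd : locally 1 (fun t => Rabs (t - 1) < d))
    by exact (locally_R_intro 1 d _ Hd (fun _ H => H)).
  generalize (filter_and _ _ (filter_and _ _ BU BV) Bd). apply filter_imp.
  intros t [[HUt HVt] Ht]. apply ball_R_iff in HUt. apply ball_R_iff in HVt.
  simpl in HUt, HVt. rewrite HU in HUt. rewrite HV in HVt.
  destruct (HS z t Hz Ht) as (Ez & Etz & _). tauto.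
Qed.

End DiagonalBranch.

Theorem lemma4p2 (U V : R -> R -> R) (d : R) :
  UV_system U V d ->
  exists eps : R, 0 < eps /\
    forall z : R, 0 < Rabs z < eps ->
      is_derive (fun x => Bf U V z x 1) 1
        ((u1 V z - 1) / u1 V z * Qf U V z * (1 - Qf U V z)) /\
      is_derive (fun w => Bf U V w 1 1) z
        ((u1 V z - 1) / (z * u1 V z) * Qf U V z * (1 - Qf U V z) + u1 V z - 1).
Proof.
  intros HUV.
  destruct (UV_diagonal_branch U V d HUV) as [eps [Heps Hbranch]].
  exists eps. split; [exact Heps|]. intros z [Hz0 Hz].
  destruct (Hbranch z Hz) as (Hzd & Hw & HV & Hzw).
  set (w := U z 1) in *.
  assert (Hw0 : w <> 0).
  { intros E. rewrite Hzw, E, Rmult_0_l, Rabs_R0 in Hz0. lra. }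
  destruct (paper_values_on_diagonal U V z w eq_refl HV Hzw Hw0 Hw) as [-> ->].
  assert (Hnear_branch : locally z (fun y =>
            Rabs (U y 1) < 1/10 /\ V y 1 = U y 1 /\ y = U y 1 * (1 - U y 1) ^ 2)).
  { apply (locally_R_intro z (eps - Rabs z)); [lra|]. intros y Hy. apply Hbranch.
    replace y with ((y - z) + z) by ring. eapply Rle_lt_trans; [apply Rabs_triang | lra]. }
  destruct (UV_sections_continuous U V d HUV z Hzd) as (cUz & cUx & _ & cVx).
  split.
  - destruct (derive_x_of_system (fun t => U z t) (fun t => V z t) z w
                (UV_system_near_x1 U V d HUV z w Hzd eq_refl HV) cUx cVx eq_refl HV Hw)
      as [dU dV].
    exact (Bx_on_diagonal U V z w eq_refl HV Hw dU dV).
  - apply Bz_on_diagonal; [| reflexivity | exact Hw |].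
    + generalize Hnear_branch. apply filter_imp. tauto.
    + apply derive_inverse_cubic; [| exact cUz | exact Hw].
      generalize Hnear_branch. apply filter_imp. tauto.
Qed.
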